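(* Let $S=(\mathcal{E},\Sigma,X,\mathcal{O})$ be an entity. Then $S$ is state atomic (i.e. for $p,q\in\Sigma$, if $O(e,p)\subseteq O(e,q)$ for all $e\in\mathcal{E}$ then $p=q$) if and only if the state eigen closure operator $cl_{eig}$ on $\Sigma$ satisfies the $T_1$ separation axiom.
   Context: An entity $S=(\mathcal{E},\Sigma,X,\mathcal{O})$ consists of a set $\mathcal{E}$, a set $\Sigma$, and for each $e\in\mathcal{E}$, $p\in\Sigma$ a nonempty set $O(e,p)$, with $X=\bigcup_{e,p}O(e,p)$. Let $O(e)=\bigcup_{p}O(e,p)$. For $e\in\mathcal{E}$, $eig_e:\mathcal{P}(O(e))\to\mathcal{P}(\Sigma)$ is $p\in eig_e(A)\iff O(e,p)\subseteq A$, and $\mathcal{F}(e)=\{eig_e(A):A\subseteq O(e)\}$. The state eigen closure system $\mathcal{F}_{eig}$ is the set of all intersections of families of elements of $\bigcup_e\mathcal{F}(e)$, and $cl_{eig}(K)=\bigcap\{F\in\mathcal{F}_{eig}:K\subseteq F\}$ for $K\subseteq\Sigma$. A closure operator $cl$ on $W$ satisfies $T_1$ iff $cl(\{w\})=\{w\}$ for all $w\in W$. *)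

Set Implicit Arguments.

Definition set (T : Type) := T -> Prop.
Definition subset {T} (A B : set T) := forall x, A x -> B x.
Definition set_eq {T} (A B : set T) := forall x, A x <-> B x.

(* An entity (E, Sigma, X, O): O e p is the nonempty outcome set O(e,p) ⊆ X,
   and X is the union of all O(e,p). *)
Record entity := {
  Ent : Type;
  St : Type;
  Out : Type;
  O : Ent -> St -> set Out;
  O_nonempty : forall e p, exists x, O e p x;
  X_union : forall x : Out, exists e p, O e p x
}.

Definition Oe (S : entity) (e : Ent S) : set (Out S) :=
  fun x => exists p, O S e p x.

Definition eig (S : entity) (e : Ent S) (A : set (Out S)) : set (St S) :=
  fun p => subset (O S e p) A.

Definition Fe (S : entity) (e : Ent S) (F : set (St S)) : Prop :=
  exists A : set (Out S), subset A (Oe S e) /\ set_eq F (eig S e A).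

Definition F_eig (S : entity) (F : set (St S)) : Prop :=
  exists Fam : set (set (St S)),
    (forall G, Fam G -> exists e, Fe S e G) /\
    set_eq F (fun p => forall G, Fam G -> G p).

Definition cl_eig (S : entity) (K : set (St S)) : set (St S) :=
  fun p => forall F, F_eig S F -> subset K F -> F p.

Definition T1 {W : Type} (cl : set W -> set W) : Prop :=
  forall w : W, set_eq (cl (fun x => x = w)) (fun x => x = w).

Definition state_atomic (S : entity) : Prop :=
  forall p q : St S, (forall e, subset (O S e p) (O S e q)) -> p = q.


(* The eigen closure of a singleton {w} is the set of states p with
   O(e,p) ⊆ O(e,w) for every e: each eig_e(O(e,w)) is a closed set containing
   w and cuts out exactly this condition at e, while every closed set is an
   intersection of sets eig_e(A), each of which is downward closed for this
   preorder. T1 therefore says that the preorder is trivial, which is state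
   atomicity. *)

Section EigenClosure.

Variable S : entity.

Lemma Fe_F_eig {e : Ent S} {G : set (St S)} : Fe S e G -> F_eig S G.
Proof.
  intros HG. exists (fun H => H = G). split.
  - intros H ->. exists e. exact HG.
  - intros p. split.
    + intros Hp H ->. exact Hp.
    + intros Hp. apply Hp. reflexivity.
Qed.

Lemma Fe_eig_O (e : Ent S) (w : St S) : Fe S e (eig S e (O S e w)).
Proof.
  exists (O S e w). split.
  - intros x Hx. exists w. exact Hx.
  - intros p. tauto.
Qed.

Lemma cl_eig_extensive (K : set (St S)) : subset K (cl_eig S K).
Proof. intros p Hp F _ HKF. exact (HKF p Hp). Qed.

Lemma F_eig_lower_closed {F : set (St S)} {p q : St S} :
  F_eig S F -> (forall e, subset (O S e p) (O S e q)) -> F q -> F p.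
Proof.
  intros [Fam [HFam HF]] Hpq Hq.
  apply HF. intros G HG.
  destruct (HFam G HG) as [e [A [_ HGA]]].
  assert (HqA : subset (O S e q) A) by (apply HGA, (proj1 (HF q) Hq), HG).
  apply HGA. intros x Hx. exact (HqA x (Hpq e x Hx)).
Qed.

Lemma cl_eig_singleton (w p : St S) :
  cl_eig S (fun x => x = w) p <-> forall e, subset (O S e p) (O S e w).
Proof.
  split.
  - intros Hp e. apply (Hp _ (Fe_F_eig (Fe_eig_O e w))).
    intros x -> y Hy. exact Hy.
  - intros Hpw F HF HwF.
    exact (F_eig_lower_closed HF Hpw (HwF w eq_refl)).
Qed.

End EigenClosure.

Theorem mainTheorem5 (S : entity) :
  state_atomic S <-> T1 (cl_eig S).
Proof.
  split.
  - intros Hat w p. split.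
    + intros Hp. exact (Hat p w (proj1 (cl_eig_singleton S w p) Hp)).
    + intros ->. apply cl_eig_extensive. reflexivity.
  - intros HT1 p q Hpq.
    exact (proj1 (HT1 q p) (proj2 (cl_eig_singleton S q p) Hpq)).
Qed.
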